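(* For all integers $a,b,c,d,e$: $$(F_{d-c}L_{e-b}-F_{e-c}L_{d-b})F_{c-a}=(F_{e-a}F_{d-c}-F_{d-a}F_{e-c})L_{c-b},$$ $$(J_{d-c}j_{e-b}-J_{e-c}j_{d-b})J_{c-a}=(J_{e-a}J_{d-c}-J_{d-a}J_{e-c})j_{c-b},$$ $$(P_{d-c}Q_{e-b}-P_{e-c}Q_{d-b})P_{c-a}=(P_{e-a}P_{d-c}-P_{d-a}P_{e-c})Q_{c-b}.$$
   Context: All sequences are indexed by $n\in\mathbb Z$. Fibonacci numbers $F_n$ and Lucas numbers $L_n$: $F_n=F_{n-1}+F_{n-2}$, $L_n=L_{n-1}+L_{n-2}$ for all $n\in\mathbb Z$, with $F_0=0,F_1=1,L_0=2,L_1=1$ (so $F_{-n}=(-1)^{n-1}F_n$, $L_{-n}=(-1)^nL_n$). Jacobsthal numbers $J_n$ and Jacobsthal–Lucas numbers $j_n$: $J_n=J_{n-1}+2J_{n-2}$, $j_n=j_{n-1}+2j_{n-2}$ for all $n\in\mathbb Z$, with $J_0=0,J_1=1,j_0=2,j_1=1$ (so $J_{-n}=(-1)^{n-1}2^{-n}J_n$, $j_{-n}=(-1)^n2^{-n}j_n$, rational for negative index). Pell numbers $P_n$ and Pell–Lucas numbers $Q_n$: $P_n=2P_{n-1}+P_{n-2}$, $Q_n=2Q_{n-1}+Q_{n-2}$ for all $n\in\mathbb Z$, with $P_0=0,P_1=1,Q_0=2,Q_1=2$ (so $P_{-n}=(-1)^{n-1}P_n$, $Q_{-n}=(-1)^nQ_n$).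 *)

(* Two-sided linear recurrences x_n = p x_{n-1} + q x_{n-2}
   (n : int), with values in rat (Jacobsthal numbers are rational for negative
   index). *)
From HB Require Import structures.
From mathcomp Require Import all_boot all_order all_algebra.
Set Implicit Arguments. Unset Strict Implicit. Unset Printing Implicit Defensive.
Import Order.TTheory GRing.Theory Num.Theory.
Local Open Scope ring_scope.

Definition rec_fwd (p q : rat) (u : rat * rat) : rat * rat :=
  (u.2, p * u.2 + q * u.1).
Definition rec_bwd (p q : rat) (u : rat * rat) : rat * rat :=
  ((u.2 - p * u.1) / q, u.1).

Definition rec_seq (p q x0 x1 : rat) (n : int) : rat :=
  match n with
  | Posz m => (iter m (rec_fwd p q) (x0, x1)).1
  | Negz m => (iter m.+1 (rec_bwd p q) (x0, x1)).1
  end.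

Definition Fib  : int -> rat := rec_seq 1 1 0 1.
Definition Luc  : int -> rat := rec_seq 1 1 2 1.
Definition Jac  : int -> rat := rec_seq 1 2 0 1.
Definition JacL : int -> rat := rec_seq 1 2 2 1.
Definition Pell : int -> rat := rec_seq 2 1 0 1.
Definition PellL : int -> rat := rec_seq 2 1 2 2.

Example fib_m3 : Fib (- 3%:Z) = 2%:R. Proof. by rewrite /Fib /rec_seq /=; vm_compute. Qed.
Example jac_m2 : Jac (- 2%:Z) = - (1 / 4%:R). Proof. by vm_compute. Qed.
Example pellL_m1 : PellL (- 1%:Z) = - 2%:R. Proof. by vm_compute. Qed.
Example luc_5 : Luc 5%:Z = 11%:R. Proof. by vm_compute. Qed.

(* Every sequence U, V satisfying x_(n+2) = p x_(n+1) + q x_n (q invertible) obeys the addition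
   formula V_(m+n) = U_n V_(m+1) + q U_(n-1) V_m, where U is the solution with U_0 = 0, U_1 = 1:
   both sides solve the recurrence in n and agree at n = 0, 1.  Expanding V_(e-b), V_(d-b),
   U_(e-a), U_(d-a) around c by this formula turns the claimed identity into a polynomial
   identity, and Fibonacci/Lucas, Jacobsthal/Jacobsthal-Lucas and Pell/Pell-Lucas are the
   instances (p, q) = (1, 1), (1, 2), (2, 1). *)
From HB Require Import structures.
From mathcomp Require Import all_boot all_order all_algebra.
From mathcomp Require Import zify ring.
Import Order.TTheory GRing.Theory Num.Theory.
Local Open Scope ring_scope.

Lemma int_ind2 (P : int -> Prop) :
  P 0 -> P 1 ->
  (forall n, P n -> P (n + 1) -> P (n + 2)) ->
  (forall n, P (n + 1) -> P (n + 2) -> P n) ->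
  forall n, P n.
Proof.
move=> P0 P1 fwd bwd n.
suff [] : P n /\ P (n + 1) by [].
elim/int_ind: n => [|n [Pn Pn1] |n [Pn Pn1]]; first by [].
- have -> : n.+1%:Z + 1 = n%:Z + 2 by lia.
  by rewrite -addn1 PoszD; split=> //; apply: fwd.
- have E1 : - n.+1%:Z + 1 = - n%:Z by lia.
  have E2 : - n.+1%:Z + 2 = - n%:Z + 1 by lia.
  by rewrite E1; split=> //; apply: bwd; rewrite ?E1 ?E2.
Qed.

Definition linrec2 {R : pzRingType} (p q : R) (u : int -> R) :=
  forall n, u (n + 2) = p * u (n + 1) + q * u n.

Section SecondOrderRecurrence.

Variables (R : fieldType) (p q : R).
Hypothesis q_neq0 : q != 0.

Lemma linrec2_eq0 (w : int -> R) :
  linrec2 p q w -> w 0 = 0 -> w 1 = 0 -> forall n, w n = 0.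
Proof.
move=> rec_w w0 w1; apply: int_ind2 => // n wn wn1.
- by rewrite rec_w wn wn1 !mulr0 addr0.
- have /esym/eqP := rec_w n.
  by rewrite wn wn1 mulr0 add0r mulf_eq0 (negbTE q_neq0) => /eqP.
Qed.

Variable U : int -> R.
Hypotheses (rec_U : linrec2 p q U) (U0 : U 0 = 0) (U1 : U 1 = 1).

Lemma linrec2_addn {V : int -> R} : linrec2 p q V -> forall m n : int,
  V (m + n) = U n * V (m + 1) + q * U (n - 1) * V m.
Proof.
move=> rec_V m n.
pose w k := V (m + k) - (U k * V (m + 1) + q * U (k - 1) * V m).
suff /(linrec2_eq0 _) w_eq0 : linrec2 p q w.
  apply/eqP; rewrite -subr_eq0; apply/eqP/w_eq0.
  - have := rec_U (-1); rewrite /w addr0 sub0r U0 U1 !mulr0 add0r => <-; ring.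
  - by rewrite /w subrr U0 U1; ring.
move=> k; rewrite /w.
have -> : m + (k + 2) = m + k + 2 by ring.
have -> : m + (k + 1) = m + k + 1 by ring.
have -> : k + 2 - 1 = k + 1 by ring.
have -> : k + 1 - 1 = k by ring.
have rec_Uk1 : U (k + 1) = p * U k + q * U (k - 1).
  have -> : k + 1 = k - 1 + 2 by ring.
  by rewrite rec_U; congr (p * U _ + _); ring.
rewrite rec_V rec_U rec_Uk1; ring.
Qed.

Lemma linrec2_five_index (V : int -> R) (a b c d e : int) : linrec2 p q V ->
  (U (d - c) * V (e - b) - U (e - c) * V (d - b)) * U (c - a)
  = (U (e - a) * U (d - c) - U (d - a) * U (e - c)) * V (c - b).
Proof.
move=> rec_V.
have -> : e - b = (c - b) + (e - c) by ring.
have -> : d - b = (c - b) + (d - c) by ring.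
have -> : e - a = (c - a) + (e - c) by ring.
have -> : d - a = (c - a) + (d - c) by ring.
have addV := linrec2_addn rec_V (c - b).
have addU := linrec2_addn rec_U (c - a).
rewrite (addV (e - c)) (addV (d - c)) (addU (e - c)) (addU (d - c)).
ring.
Qed.

End SecondOrderRecurrence.

Lemma rec_seq_bwd_iter (p q x0 x1 : rat) (m : nat) :
  iter m (rec_bwd p q) (x0, x1) =
  (rec_seq p q x0 x1 (- m%:Z), rec_seq p q x0 x1 (- m%:Z + 1)).
Proof.
elim: m => [|m IH] //.
have -> : - m.+1%:Z = Negz m by rewrite NegzE.
have -> : Negz m + 1 = - m%:Z by rewrite NegzE; lia.
by rewrite iterS /= IH.
Qed.

Lemma rec_seq_linrec2 (p q x0 x1 : rat) :
  q != 0 -> linrec2 p q (rec_seq p q x0 x1).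
Proof.
move=> q_neq0 [] m.
  have -> : m%:Z + 2 = m.+2%:Z by lia.
  have -> : m%:Z + 1 = m.+1%:Z by lia.
  by rewrite /= addrC.
have -> : Negz m + 2 = - m%:Z + 1 by rewrite NegzE; lia.
have -> : Negz m + 1 = - m%:Z by rewrite NegzE; lia.
by rewrite /= rec_seq_bwd_iter /=; field.
Qed.

Theorem corollary1 (a b c d e : int) :
  [/\ (Fib (d - c) * Luc (e - b) - Fib (e - c) * Luc (d - b)) * Fib (c - a)
        = (Fib (e - a) * Fib (d - c) - Fib (d - a) * Fib (e - c)) * Luc (c - b),
      (Jac (d - c) * JacL (e - b) - Jac (e - c) * JacL (d - b)) * Jac (c - a)
        = (Jac (e - a) * Jac (d - c) - Jac (d - a) * Jac (e - c)) * JacL (c - b)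
    & (Pell (d - c) * PellL (e - b) - Pell (e - c) * PellL (d - b)) * Pell (c - a)
        = (Pell (e - a) * Pell (d - c) - Pell (d - a) * Pell (e - c)) * PellL (c - b)].
Proof.
split.
- by apply: (@linrec2_five_index _ 1 1) => //; apply: rec_seq_linrec2.
- by apply: (@linrec2_five_index _ 1 2) => //; apply: rec_seq_linrec2.
- by apply: (@linrec2_five_index _ 2 1) => //; apply: rec_seq_linrec2.
Qed.
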